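(* Let $\Pi$ be the $3$-regular sinkless and sourceless orientation problem and let $k\ge0$ be an integer. Then, up to renaming of labels, $\mathcal{Q}^k(\Pi)$ has the following constraints. Here $[X\,Y]$ denotes a position that may hold any label from $\{X,Y\}$. - If $k=0$: node constraint $\mathsf B\,\mathsf C\,[\mathsf B\,\mathsf C]$; edge constraint $\mathsf B\,\mathsf C$. - If $k=1$: node constraint $\mathsf B\,\mathsf C\,\mathsf D$; edge constraint $[\mathsf B\,\mathsf D]\,[\mathsf C\,\mathsf D]$. - If $k\ge2$: the label set is $\{\mathsf B,\mathsf C\}\cup\{\mathsf A_i:1\le i\le k-1\}\cup\{\mathsf D_i:1\le i\le k\}$. - The node constraint consists of $\mathsf B\,\mathsf C\,\mathsf D_k$ and $\mathsf A_i\,\mathsf D_i\,\mathsf D_k$ for each $1\le i\le k-1$. - The edge constraint consists of all configurations in $[\mathsf B\,\mathsf D_1\,\dots\,\mathsf D_k]\,[\mathsf C\,\mathsf D_1\,\dots\,\mathsf D_k]$, together with $\mathsf A_i\,\mathsf D_j$ for each $1\le i<j\le k$.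
   Context: Here $\Delta=3$. A node-edge-checkable problem $\Pi=(\Sigma_\Pi,\mathcal{N}_\Pi,\mathcal{E}_\Pi)$ has a finite label set, a node constraint $\mathcal{N}_\Pi$ (a set of cardinality-$3$ multisets over $\Sigma_\Pi$) and an edge constraint $\mathcal{E}_\Pi$ (a set of cardinality-$2$ multisets). The sinkless and sourceless orientation problem has labels $\{\mathsf I,\mathsf O\}$. Its node configurations contain at least one $\mathsf I$ and at least one $\mathsf O$, and its only edge configuration is $\mathsf I\,\mathsf O$. Round elimination. $\mathrm{R}(\Pi)$ is defined as follows. - $\mathcal{E}_{\mathrm{R}(\Pi)}$ consists of the configurations $S_1S_2$ of nonempty subsets of $\Sigma_\Pi$ with $L_1L_2\in\mathcal{E}_\Pi$ for all $L_i\in S_i$ that are maximal. Maximal means no other such configuration $S'_1S'_2$ has $S_i\subseteq S'_{\rho(i)}$ for a permutation $\rho$. - $\Sigma_{\mathrm{R}(\Pi)}$ is the set of sets occurring there. - $\mathcal{N}_{\mathrm{R}(\Pi)}$ consists of the configurations over $\Sigma_{\mathrm{R}(\Pi)}$ admitting a choice in $\mathcal{N}_\Pi$. $\bar{\mathrm{R}}(\Pi)$ is defined dually. - $\mathcal{N}_{\bar{\mathrm{R}}(\Pi)}$ consists of the maximal configurations of nonempty subsets all of whose choices lie in $\mathcal{N}_\Pi$. - $\Sigma_{\bar{\mathrm{R}}(\Pi)}$ is the set of sets occurring there. - $\mathcal{E}_{\bar{\mathrm{R}}(\Pi)}$ consists of the configurations over $\Sigma_{\bar{\mathrm{R}}(\Pi)}$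 admitting a choice in $\mathcal{E}_\Pi$. $\mathcal{Q}=\bar{\mathrm{R}}\circ\mathrm{R}$, and $\mathcal{Q}^k$ is its $k$-fold iterate. *)

From HB Require Import structures.
From mathcomp Require Import all_boot.
Set Implicit Arguments. Unset Strict Implicit. Unset Printing Implicit Defensive.

(* A node-edge-checkable problem (Delta = 3) over a label universe T.
   plab  : the label set Sigma (as a predicate on T);
   pnode : node configurations, a configuration (multiset) being represented
           by any sequence listing its elements;
   pedge : edge configurations, likewise.
   Multisets are read via [cfg]: a sequence s is in the constraint iff it has
   the right cardinality and is a permutation of a listed sequence. *)
Record problem (T : Type) := Problem {
  plab  : T -> Prop;
  pnode : seq T -> Prop;
  pedge : seq T -> Prop }.

Definition cfg {T : eqType} (n : nat) (C : seq T -> Prop) (s : seq T) : Prop :=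
  size s = n /\ exists s', perm_eq s s' /\ C s'.

Definition inN {T : eqType} (P : problem T) (s : seq T) := cfg 3 (pnode P) s.
Definition inE {T : eqType} (P : problem T) (s : seq T) := cfg 2 (pedge P) s.
Definition all_lab {T : eqType} (P : problem T) (s : seq T) :=
  forall x, x \in s -> plab P x.

Section RoundElim.
Variable T : finType.

Definition nesub (P : problem T) (S : {set T}) :=
  S != set0 /\ forall x, x \in S -> plab P x.

Definition is_choice (l : seq T) (s : seq {set T}) :=
  all2 (fun (L : T) (S : {set T}) => L \in S) l s.

Definition dominated (s s' : seq {set T}) : Prop :=
  exists t, perm_eq t s' /\ all2 (fun a b : {set T} => a \subset b) s t.

Definition maximal (cand : seq {set T} -> Prop) (s : seq {set T}) : Prop :=
  cand s /\ forall s', cand s' -> dominated s s' -> perm_eq s s'.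

Definition R_cand (P : problem T) (s : seq {set T}) :=
  size s = 2 /\ (forall S, S \in s -> nesub P S) /\
  (forall l, is_choice l s -> inE P l).
Definition R_edge (P : problem T) := maximal (R_cand P).
Definition R_lab (P : problem T) (S : {set T}) :=
  exists s, R_edge P s /\ S \in s.
Definition R_node (P : problem T) (s : seq {set T}) :=
  size s = 3 /\ (forall S, S \in s -> R_lab P S) /\
  exists l, is_choice l s /\ inN P l.
Definition R (P : problem T) : problem {set T} :=
  Problem (R_lab P) (R_node P) (R_edge P).

Definition Rb_cand (P : problem T) (s : seq {set T}) :=
  size s = 3 /\ (forall S, S \in s -> nesub P S) /\
  (forall l, is_choice l s -> inN P l).
Definition Rb_node (P : problem T) := maximal (Rb_cand P).
Definition Rb_lab (P : problem T) (S : {set T}) :=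
  exists s, Rb_node P s /\ S \in s.
Definition Rb_edge (P : problem T) (s : seq {set T}) :=
  size s = 2 /\ (forall S, S \in s -> Rb_lab P S) /\
  exists l, is_choice l s /\ inE P l.
Definition Rbar (P : problem T) : problem {set T} :=
  Problem (Rb_lab P) (Rb_node P) (Rb_edge P).

End RoundElim.

Definition Qop (T : finType) (P : problem T) : problem {set {set T}} :=
  Rbar (R P).

Definition lI := false.
Definition lO := true.
Definition Pi0 : problem bool :=
  Problem (fun x => x = lI \/ x = lO)
          (fun s => size s = 3 /\ lI \in s /\ lO \in s)
          (fun s => s = [:: lI; lO]).

Fixpoint labT (k : nat) : finType :=
  if k is k'.+1 then ({set {set labT k'}} : finType) else (bool : finType).

Fixpoint Qk (k : nat) : problem (labT k) :=
  match k return problem (labT k) with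
  | 0 => Pi0
  | k'.+1 => Qop (Qk k')
  end.

(* "up to renaming of labels": a bijection between label sets preserving
   node and edge constraints (as sets of multisets). *)
Definition iso {T U : eqType} (P : problem T) (P' : problem U) : Prop :=
  exists f : T -> U,
    (forall x y, plab P x -> plab P y -> f x = f y -> x = y) /\
    (forall y, plab P' y <-> exists x, plab P x /\ f x = y) /\
    (forall s, inN P s <-> (all_lab P s /\ inN P' (map f s))) /\
    (forall t, inN P' t -> all_lab P' t) /\
    (forall s, inE P s <-> (all_lab P s /\ inE P' (map f s))) /\
    (forall t, inE P' t -> all_lab P' t).

Inductive tlab := TB | TC | TA of nat | TD of nat.
Definition tlab_eq_dec (x y : tlab) : {x = y} + {x <> y}.
Proof. decide equality; apply: (decP eqP). Defined.
HB.instance Definition _ := comparableMixin tlab_eq_dec.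

Definition target0 : problem tlab :=
  Problem (fun x => x = TB \/ x = TC)
          (fun s => s = [:: TB; TC; TB] \/ s = [:: TB; TC; TC])
          (fun s => s = [:: TB; TC]).

Definition target1 : problem tlab :=
  Problem (fun x => x = TB \/ x = TC \/ x = TD 1)
          (fun s => s = [:: TB; TC; TD 1])
          (fun s => exists x y, (x = TB \/ x = TD 1) /\ (y = TC \/ y = TD 1)
                                /\ s = [:: x; y]).

Definition isD (k : nat) (x : tlab) := exists j, 1 <= j <= k /\ x = TD j.

Definition targetk (k : nat) : problem tlab :=
  Problem (fun x => x = TB \/ x = TC \/ (exists i, 1 <= i <= k - 1 /\ x = TA i)
                    \/ isD k x)
          (fun s => s = [:: TB; TC; TD k] \/
                    exists i, 1 <= i <= k - 1 /\ s = [:: TA i; TD i; TD k])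
          (fun s => (exists x y, (x = TB \/ isD k x) /\ (y = TC \/ isD k y)
                                 /\ s = [:: x; y]) \/
                    exists i j, 1 <= i < j /\ j <= k /\ s = [:: TA i; TD j]).

Definition target (k : nat) : problem tlab :=
  match k with 0 => target0 | 1 => target1 | _ => targetk k end.

(* Round elimination only depends on a problem up to renaming of labels, so each of the
   steps R and Rbar can be carried out on a concrete presentation: a problem whose label w
   stands for a set [sg w] of labels of the previous problem, such that the configurations
   of the constraint built from maximal configurations (edges for R, nodes for Rbar) are
   exactly its own, and those of the other constraint are its configurations admitting an
   allowed choice.

   For every k, R(Q^k(Π)) is presented by the labels U = [B D], V = [C D],
   X_i = [D_(i+1) .. D_k] and Y_i = [B C D A_1 .. A_i] (i < k), where D = D_1 .. D_k, with
   edge configurations U V and X_i Y_i and with node configurations the triples containing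
   a compatible pair, i.e. two sets containing B and C, or A_j and D_j.  Applying Rbar, the
   maximal triples of sets all of whose choices contain a compatible pair are B C D_(k+1)
   and A_i D_i D_(k+1), for B = [U Y], C = [V Y], A_i = [Y_(i-1) .. Y_(k-1)] and
   D_i = [U V Y X_0 .. X_(i-2)]; this is the claimed form of Q^(k+1)(Π).  The sinkless and
   sourceless orientation problem itself is the case k = 0 (with I = B and O = C). *)

From HB Require Import structures.
From Pilot Require Import Defs.
From mathcomp Require Import all_boot zify.
From Stdlib Require List.
From Stdlib Require Import ClassicalEpsilon.

Set Implicit Arguments. Unset Strict Implicit. Unset Printing Implicit Defensive.

Definition asbool (A : Prop) : bool :=
  if excluded_middle_informative A then true else false.

Lemma asboolP (A : Prop) : reflect A (asbool A).
Proof. by rewrite /asbool; case: excluded_middle_informative => h; constructor. Qed.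

Lemma not_all_ex (X : Type) (A p : pred X) :
  ~ (forall x, A x -> p x) -> exists2 x, A x & ~~ p x.
Proof.
move=> h; apply: NNPP => none; apply: h => x Ax.
by apply/negPn/negP => npx; apply: none; exists x.
Qed.

Section All2.
Variables (A B : Type) (r : A -> B -> bool).

Lemma all2_size s t : all2 r s t -> size s = size t.
Proof. by elim: s t => [|x s IH] [|y t] //= /andP [_ /IH ->]. Qed.

Lemma all2_cat s1 s2 t1 t2 : size s1 = size t1 ->
  all2 r (s1 ++ s2) (t1 ++ t2) = all2 r s1 t1 && all2 r s2 t2.
Proof. by elim: s1 t1 => [|x s1 IH] [|y t1] //= [/IH ->]; rewrite andbA. Qed.

Lemma all2_flip s t : all2 r s t = all2 (fun y x => r x y) t s.
Proof. by elim: s t => [|x s IH] [|y t] //=; rewrite IH. Qed.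

Lemma all2_catl_inv s1 s2 t : all2 r (s1 ++ s2) t ->
  exists t1 t2, [/\ t = t1 ++ t2, all2 r s1 t1 & all2 r s2 t2].
Proof.
elim: s1 t => [|x s1 IH] t; first by exists [::], t.
case: t => [|y t] //= /andP [rxy /IH [t1 [t2 [-> h1 h2]]]].
by exists (y :: t1), t2; rewrite /= rxy.
Qed.

Lemma all2_pointwise s t : size s = size t ->
  (forall s1 x s2 t1 y t2, s = s1 ++ x :: s2 -> t = t1 ++ y :: t2 ->
     size s1 = size t1 -> r x y) ->
  all2 r s t.
Proof.
elim: s t => [|x s IH] [|y t] //= [sz] H.
rewrite (H [::] x s [::] y t) //=; apply: IH sz _ => s1 x' s2 t1 y' t2 es et e1.
by apply: (H (x :: s1) x' s2 (y :: t1) y' t2); rewrite ?es ?et //= e1.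
Qed.

End All2.

Lemma all2_eq_map (A : eqType) (B : Type) (g : B -> A) s t :
  all2 (fun x y => x == g y) s t -> s = map g t.
Proof. by elim: s t => [|x s IH] [|y t] //= /andP [/eqP -> /IH ->]. Qed.

Lemma perm_cons_mid (A : eqType) (x : A) s s1 s2 :
  perm_eq (x :: s) (s1 ++ x :: s2) = perm_eq s (s1 ++ s2).
Proof. by rewrite (permPr (permEl (perm_catCA s1 [:: x] s2))) perm_cons. Qed.

Lemma perm_rcons_mid (A : eqType) (x : A) s1 s2 :
  perm_eq (s1 ++ x :: s2) (rcons (s1 ++ s2) x).
Proof. by rewrite perm_sym (permPl (permEl (perm_rcons _ _))) perm_cons_mid. Qed.

Lemma all2_perm (A B : eqType) (r : A -> B -> bool) s t s' :
  all2 r s t -> perm_eq s s' -> exists2 t', perm_eq t t' & all2 r s' t'.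
Proof.
elim: s t s' => [|x s IH] [|y t] s' //=.
  by rewrite perm_sym => _ /perm_nilP ->; exists [::].
case/andP => rxy rst pe.
have xs' : x \in s' by rewrite -(perm_mem pe) mem_head.
move: pe; case/splitPr: xs' => s1 s2.
rewrite perm_cons_mid => pe.
have [t' tt' /all2_catl_inv [t1 [t2 [et h1 h2]]]] := IH _ _ rst pe.
exists (t1 ++ y :: t2).
  by rewrite perm_cons_mid -et.
by rewrite all2_cat ?(all2_size h1) //= rxy h1 h2.
Qed.

Lemma perm_map_inv (A B : eqType) (g : B -> A) s t :
  perm_eq s (map g t) -> exists2 t', perm_eq t t' & s = map g t'.
Proof.
have gt : all2 (fun x y => x == g y) (map g t) t by elim: t => //= y t ->; rewrite eqxx.
rewrite perm_sym => /(all2_perm gt) [t' tt' /all2_eq_map ->]; by exists t'.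
Qed.

Definition perm_closed (X : eqType) (C : seq X -> Prop) :=
  forall s s', perm_eq s s' -> C s -> C s'.

Section Configurations.
Variables (X : eqType) (n : nat) (C : seq X -> Prop).

Lemma cfg_perm : perm_closed (cfg n C).
Proof.
move=> s s' ss' [sz [s'' [p c]]]; split; first by rewrite -(perm_size ss').
by exists s''; rewrite -(permPl ss').
Qed.

Lemma cfg_size s : cfg n C s -> size s = n.
Proof. by case. Qed.

Lemma cfg_id : perm_closed C -> (forall s, C s -> size s = n) ->
  forall s, cfg n C s <-> C s.
Proof.
move=> Cp Cn s; split; last by move=> c; split; [exact: Cn|exists s].
by case=> _ [s' [p c]]; apply: Cp c; rewrite perm_sym.
Qed.

Lemma cfg_all_lab (P : problem X) s :
  (forall s, C s -> all_lab P s) -> cfg n C s -> all_lab P s.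
Proof. by move=> h [_ [s' [p /h c]]] x; rewrite (perm_mem p) => /c. Qed.

End Configurations.

Lemma all_lab_cons (X : eqType) (P : problem X) x s :
  all_lab P (x :: s) <-> plab P x /\ all_lab P s.
Proof.
split=> [h|[hx hs] y]; last by rewrite in_cons => /orP [/eqP ->|/hs].
by split=> [|y ys]; apply: h; rewrite in_cons ?eqxx ?ys ?orbT.
Qed.

Lemma all_labP (X : eqType) (P : problem X) (p : pred X) :
  (forall x, plab P x <-> p x) -> forall s, all_lab P s <-> all p s.
Proof.
move=> h s; split=> [l|/allP a x /a /h //].
by apply/allP => x /l /h.
Qed.

Lemma perm2E (X : eqType) (a b : X) s :
  perm_eq [:: a; b] s -> s = [:: a; b] \/ s = [:: b; a].
Proof.
move=> pe; have := perm_size pe; case: s pe => [|x [|y [|z s]]] //= pe _.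
have : a \in [:: x; y] by rewrite -(perm_mem pe) mem_head.
rewrite !in_cons orbF => /orP [/eqP ax|/eqP ay]; [subst x; left|subst y; right].
  by move: pe; rewrite perm_cons => /perm_mem /(_ b); rewrite !mem_seq1 eqxx => /esym/eqP ->.
move: pe; rewrite (perm_cons_mid a [:: b] [:: x] [::]).
by move=> /perm_mem /(_ b); rewrite !mem_seq1 eqxx => /esym/eqP ->.
Qed.

Inductive or6 (P1 P2 P3 P4 P5 P6 : Prop) : Prop :=
  Or61 of P1 | Or62 of P2 | Or63 of P3 | Or64 of P4 | Or65 of P5 | Or66 of P6.

Lemma perm3E (X : eqType) (a b c : X) s : perm_eq [:: a; b; c] s ->
  or6 (s = [:: a; b; c]) (s = [:: a; c; b]) (s = [:: b; a; c]) (s = [:: b; c; a])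
      (s = [:: c; a; b]) (s = [:: c; b; a]).
Proof.
move=> pe; have := perm_size pe; case: s pe => [|x [|y [|z [|w s]]]] //= pe _.
have : a \in [:: x; y; z] by rewrite -(perm_mem pe) mem_head.
rewrite !in_cons orbF => /orP [/eqP ax|/orP [/eqP ay|/eqP az]].
- subst x; move: pe; rewrite perm_cons => /perm2E [[-> ->]|[-> ->]];
    by [constructor 1|constructor 2].
- subst y; move: pe; rewrite (perm_cons_mid a [:: b; c] [:: x] [:: z]) /=.
  by move=> /perm2E [[-> ->]|[-> ->]]; [constructor 3|constructor 5].
- subst z; move: pe; rewrite (perm_cons_mid a [:: b; c] [:: x; y] [::]) /=.
  by move=> /perm2E [[-> ->]|[-> ->]]; [constructor 4|constructor 6].
Qed.

Lemma cfg2E (X : eqType) (C : seq X -> Prop) (g : X -> X -> bool) :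
  (forall a b, C [:: a; b] <-> g a b) ->
  forall a b, cfg 2 C [:: a; b] <-> g a b || g b a.
Proof.
move=> h a b; split.
  by case=> _ [s [/perm2E [->|->] /h ->]]; rewrite ?orbT.
case/orP => hg; split=> //; first by exists [:: a; b]; split=> //; apply/h.
by exists [:: b; a]; split; [apply/permP => p /=; lia|apply/h].
Qed.

Lemma cfg3E (X : eqType) (C : seq X -> Prop) (g : X -> X -> X -> bool) :
  (forall a b c, C [:: a; b; c] <-> g a b c) ->
  forall a b c, cfg 3 C [:: a; b; c] <->
    [|| g a b c, g a c b, g b a c, g b c a, g c a b | g c b a].
Proof.
move=> h a b c; split.
  by case=> _ [s [/perm3E [] -> /h ->]]; rewrite ?orbT.
have ex s : perm_eq [:: a; b; c] s -> C s -> cfg 3 C [:: a; b; c].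
  by move=> p cs; split=> //; exists s.
case/orP => [hg|/orP [hg|/orP [hg|/orP [hg|/orP [hg|hg]]]]];
  [apply: (ex [:: a; b; c])|apply: (ex [:: a; c; b])|apply: (ex [:: b; a; c])
  |apply: (ex [:: b; c; a])|apply: (ex [:: c; a; b])|apply: (ex [:: c; b; a])];
  by [apply/permP => p /=; lia|apply/h].
Qed.

Section Choices.
Variable T : finType.
Implicit Types (l : seq T) (s t : seq {set T}) (P : problem T).

Lemma is_choice_perm l s s' :
  is_choice l s -> perm_eq s s' -> exists2 l', perm_eq l l' & is_choice l' s'.
Proof.
rewrite /is_choice all2_flip => /all2_perm h /h [l' ll' h'].
by exists l'; rewrite // all2_flip.
Qed.

Lemma is_choice_cat l s1 s2 : is_choice l (s1 ++ s2) ->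
  exists l1 l2, [/\ l = l1 ++ l2, is_choice l1 s1 & is_choice l2 s2].
Proof.
rewrite /is_choice all2_flip => /all2_catl_inv [l1 [l2 [-> h1 h2]]].
by exists l1, l2; split => //; rewrite all2_flip.
Qed.

Lemma is_choice_subset l s t :
  is_choice l s -> all2 (fun S S' : {set T} => S \subset S') s t -> is_choice l t.
Proof.
elim: l s t => [|x l IH] [|S s] [|S' t] //= /andP [xS /IH h] /andP [/subsetP sub /h ->].
by rewrite sub.
Qed.

Lemma is_choice_exists s : (forall S, S \in s -> S != set0) -> exists l, is_choice l s.
Proof.
elim: s => [|S s IH] ne; first by exists [::].
have [x xS] := set0Pn _ (ne S (mem_head S s)).
have [l h] : exists l, is_choice l s.
  by apply: IH => S' S's; apply: ne; rewrite in_cons S's orbT.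
by exists (x :: l); rewrite /is_choice /= xS.
Qed.

Lemma existential_perm n (lab : {set T} -> Prop) (C : seq T -> Prop) : perm_closed C ->
  perm_closed (fun s => size s = n /\ (forall S, S \in s -> lab S) /\
                        exists l, is_choice l s /\ C l).
Proof.
move=> Cp s s' ss' [sz [lb [l [/is_choice_perm /(_ ss') [l' ll' h] c]]]].
split; first by rewrite -(perm_size ss').
by split=> [S|]; [rewrite -(perm_mem ss'); apply: lb|exists l'; split=> //; apply: Cp c].
Qed.

Definition cand P (C : seq T -> Prop) n s :=
  size s = n /\ (forall S, S \in s -> nesub P S) /\ (forall l, is_choice l s -> C l).

Lemma cand_perm P C n : perm_closed C -> perm_closed (cand P C n).
Proof.
move=> Cp s s' ss' [sz [ne ch]]; split; first by rewrite -(perm_size ss').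
split; first by move=> S; rewrite -(perm_mem ss'); apply: ne.
rewrite perm_sym in ss'.
by move=> l /is_choice_perm /(_ ss') [l' ll' /ch]; apply: Cp; rewrite perm_sym.
Qed.

Lemma maximal_perm (C : seq {set T} -> Prop) : perm_closed C -> perm_closed (maximal C).
Proof.
move=> Cp s s' ss' [Cs ms]; split; first exact: Cp Cs.
move=> s'' Cs'' [t [tt'' st]].
rewrite perm_sym in ss'; have [t' tt' s't'] := all2_perm st ss'.
have : perm_eq s s'' by apply: ms => //; exists t'; rewrite -(permPl tt').
by rewrite -(permPl ss').
Qed.

End Choices.

Section InverseRenaming.
Variables (X Y : eqType) (P : problem X) (Q : problem Y) (g : Y -> X).
Hypothesis Y_inhabited : inhabited Y.
Hypothesis g_inj : forall y y', plab Q y -> plab Q y' -> g y = g y' -> y = y'.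
Hypothesis g_lab : forall x, plab P x <-> exists2 y, plab Q y & x = g y.

Lemma map_inj_lab t t' : all_lab Q t -> all_lab Q t' -> map g t = map g t' -> t = t'.
Proof.
elim: t t' => [|y t IH] [|y' t'] //= /all_lab_cons [ly lt] /all_lab_cons [ly' lt'] [e es].
by rewrite (g_inj ly ly' e) (IH t' lt lt' es).
Qed.

Let ginv (x : X) : Y := epsilon Y_inhabited (fun y => plab Q y /\ x = g y).

Let ginvK y : plab Q y -> ginv (g y) = y.
Proof.
move=> ly; have [ly' e] := epsilon_spec Y_inhabited (fun y' => plab Q y' /\ g y = g y')
  (ex_intro _ y (conj ly erefl)).
by apply: g_inj.
Qed.

Let gK x : plab P x -> plab Q (ginv x) /\ x = g (ginv x).
Proof. by move/g_lab => [y ly ->]; rewrite ginvK. Qed.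

Let constraint_transfer (CP : seq X -> Prop) (CQ : seq Y -> Prop) :
  (forall s, CP s -> all_lab P s) ->
  (forall t, all_lab Q t -> CP (map g t) <-> CQ t) ->
  forall s, CP s <-> all_lab P s /\ CQ (map ginv s).
Proof.
move=> CP_lab CPQ s.
have lift : all_lab P s -> all_lab Q (map ginv s) /\ s = map g (map ginv s).
  move=> ls; split; first by move=> y /mapP [x /ls /gK [ly _] ->].
  by rewrite -map_comp map_id_in // => x /ls /gK [_ {2}->].
split=> [cs|[ls cq]].
  have [lq es] := lift (CP_lab s cs).
  by split; [exact: CP_lab|apply/CPQ => //; rewrite -es].
by have [lq ->] := lift ls; apply/CPQ.
Qed.

Lemma iso_of_inverse :
  (forall s, inN P s -> all_lab P s) -> (forall t, inN Q t -> all_lab Q t) ->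
  (forall s, Defs.inE P s -> all_lab P s) -> (forall t, Defs.inE Q t -> all_lab Q t) ->
  (forall t, all_lab Q t -> inN P (map g t) <-> inN Q t) ->
  (forall t, all_lab Q t -> Defs.inE P (map g t) <-> Defs.inE Q t) ->
  iso P Q.
Proof.
move=> PN_lab QN_lab PE_lab QE_lab node edge.
exists ginv; split.
  by move=> x x' /gK [_ {2}->] /gK [_ {2}->] ->.
split.
  move=> y; split=> [ly|[x [/gK [ly _] <-]] //].
  by exists (g y); rewrite ginvK //; split=> //; apply/g_lab; exists y.
by split; [exact: constraint_transfer|split; [|split; [exact: constraint_transfer|]]].
Qed.

End InverseRenaming.

(* A label [w] of [Q] stands for the set [sg w] of labels of [P']; [R_presentation] and
   [Rbar_presentation] say that, up to this renaming, [Q] is R(P') or Rbar(P'). *)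
Section PresentationDef.
Variables (U W : eqType) (P' : problem U) (Q : problem W) (sg : W -> pred U).

Definition sg_choice (us : seq U) (ws : seq W) := all2 (fun u w => sg w u) us ws.

Record presentation : Prop := Presentation {
  sg_nonempty : forall w, plab Q w -> exists u, sg w u;
  sg_lab : forall w u, plab Q w -> sg w u -> plab P' u;
  sg_inj : forall w w', plab Q w -> plab Q w' -> sg w =1 sg w' -> w = w';
  Q_node_lab : forall ws, inN Q ws -> all_lab Q ws;
  Q_edge_lab : forall ws, Defs.inE Q ws -> all_lab Q ws }.

Definition maximal_presentation (CP : seq U -> Prop) (CQ : seq W -> Prop) : Prop :=
  [/\ forall ws us, CQ ws -> sg_choice us ws -> CP us,
      forall ws w u, CQ (rcons ws w) -> plab P' u ->
        (forall us, sg_choice us ws -> CP (rcons us u)) -> sg w u,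
      forall As : seq (pred U),
        (exists us, all2 (fun u (A : pred U) => A u) us As) ->
        (forall us, all2 (fun u (A : pred U) => A u) us As -> CP us) ->
        exists2 ws, CQ ws & List.Forall2 (fun (A : pred U) w => forall u, A u -> sg w u) As ws
    & forall w, plab Q w -> exists2 ws, CQ ws & w \in ws].

Definition existential_presentation (CP : seq U -> Prop) (CQ : seq W -> Prop) :=
  forall ws, all_lab Q ws -> (exists2 us, sg_choice us ws & CP us) <-> CQ ws.

Definition R_presentation :=
  [/\ presentation, maximal_presentation (Defs.inE P') (Defs.inE Q)
    & existential_presentation (inN P') (inN Q)].

Definition Rbar_presentation :=
  [/\ presentation, maximal_presentation (inN P') (inN Q)
    & existential_presentation (Defs.inE P') (Defs.inE Q)].

End PresentationDef.

Section Transfer.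
Variables (T : finType) (U W : eqType) (P : problem T) (P' : problem U) (Q : problem W).
Variables (f : T -> U) (sg : W -> pred U).
Hypothesis f_lab : forall u, plab P' u <-> exists x, plab P x /\ f x = u.
Hypothesis Qpres : presentation P' Q sg.

Definition pre w : {set T} := [set x | asbool (plab P x) && sg w (f x)].

Lemma preP w x : reflect (plab P x /\ sg w (f x)) (x \in pre w).
Proof.
rewrite inE; apply: (iffP andP) => [[/asboolP ? ?]|[? ?]] //.
by split=> //; apply/asboolP.
Qed.

Lemma pre_lift w u : plab Q w -> sg w u -> exists2 x, x \in pre w & f x = u.
Proof.
move=> lw su; have /f_lab [x [lx fx]] := sg_lab Qpres lw su.
by exists x => //; apply/preP; rewrite fx.
Qed.

Lemma pre_nesub w : plab Q w -> nesub P (pre w).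
Proof.
move=> lw; split; last by move=> x /preP [].
have [u su] := sg_nonempty Qpres lw; have [x xw _] := pre_lift lw su.
by apply/set0Pn; exists x.
Qed.

Lemma pre_inj w w' : plab Q w -> plab Q w' -> pre w = pre w' -> w = w'.
Proof.
move=> lw lw' e; apply: (sg_inj Qpres) => // u.
apply/idP/idP => su; [have [x + <-] := pre_lift lw su|have [x + <-] := pre_lift lw' su].
  by rewrite e => /preP [].
by rewrite -e => /preP [].
Qed.

Lemma is_choice_preE l ws :
  is_choice l (map pre ws) <-> all_lab P l /\ sg_choice sg (map f l) ws.
Proof.
elim: l ws => [|x l IH] [|w ws] /=; try by split=> [|[]].
rewrite /is_choice /= all_lab_cons -/(is_choice l (map pre ws)).
split=> [/andP [/preP [lx sx] /IH [ll sl]]|[[lx ll] /andP [sx sl]]].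
  by split=> //; rewrite sx.
by rewrite (introT (preP _ _) (conj lx sx)); apply/IH.
Qed.

Lemma sg_choice_lift us ws : all_lab Q ws -> sg_choice sg us ws ->
  exists2 l, is_choice l (map pre ws) & map f l = us.
Proof.
elim: us ws => [|u us IH] [|w ws] // lws; first by exists [::].
case/all_lab_cons: lws => lw lws /andP [su /(IH _ lws) [l hl <-]].
have [x xw <-] := pre_lift lw su.
by exists (x :: l) => //; rewrite /is_choice /= xw.
Qed.

Definition img (S : {set T}) : pred U := fun u => [exists x in S, f x == u].

Lemma img_choiceE us Ss : all2 (fun u (A : pred U) => A u) us (map img Ss) <->
  exists2 l, is_choice l Ss & map f l = us.
Proof.
elim: us Ss => [|u us IH] [|S Ss] /=.
- by split=> // _; exists [::].
- by split=> // -[[|x l]].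
- by split=> // -[[|x l]].
split=> [/andP [/existsP [x /andP [xS /eqP <-]] /(IH Ss) [l hl <-]]|[[|x l] //]].
  by exists (x :: l); rewrite /is_choice //= xS.
rewrite /is_choice /= => /andP [xS hl] [fx fl].
apply/andP; split; first by apply/existsP; exists x; rewrite xS fx /=.
by apply/IH; exists l.
Qed.

Lemma img_sub_pre Ss ws : (forall S, S \in Ss -> nesub P S) ->
  List.Forall2 (fun (A : pred U) w => forall u, A u -> sg w u) (map img Ss) ws ->
  all2 (fun S S' : {set T} => S \subset S') Ss (map pre ws).
Proof.
elim: Ss ws => [|S Ss IH] [|w ws] ne F //=; try by inversion F.
case/List.Forall2_cons_iff: F => sub F.
rewrite IH ?andbT //; last by move=> S' h; apply: ne; rewrite in_cons h orbT.
apply/subsetP => x xS; apply/preP; split; first by case: (ne S (mem_head _ _)) => _ /(_ x xS).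
by apply: sub; apply/existsP; exists x; rewrite xS eqxx.
Qed.

Section Constraint.
Variables (n : nat) (CT : seq T -> Prop) (CP : seq U -> Prop) (CQ : seq W -> Prop).
Hypothesis CT_f : forall l, CT l <-> all_lab P l /\ CP (map f l).
Hypothesis CT_perm : perm_closed CT.
Hypothesis CQ_perm : perm_closed CQ.
Hypothesis CQ_size : forall ws, CQ ws -> size ws = n.
Hypothesis CQ_lab : forall ws, CQ ws -> all_lab Q ws.

Lemma existential_preE : existential_presentation Q sg CP CQ ->
  forall ws, all_lab Q ws -> (exists l, is_choice l (map pre ws) /\ CT l) <-> CQ ws.
Proof.
move=> ex ws lws; rewrite -ex //; split.
  by case=> l [/is_choice_preE [ll sl] /CT_f [_ cp]]; exists (map f l).
case=> us /(sg_choice_lift lws) [l hl <-] cp; exists l; split=> //.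
by apply/CT_f; split=> //; case/is_choice_preE: hl.
Qed.

Lemma cfg_existential_preE (lab : {set T} -> Prop) :
  existential_presentation Q sg CP CQ -> (forall w, plab Q w -> lab (pre w)) ->
  forall ws, all_lab Q ws ->
  cfg n (fun s => size s = n /\ (forall S, S \in s -> lab S) /\
                  exists l, is_choice l s /\ CT l) (map pre ws) <-> CQ ws.
Proof.
move=> ex lab_pre ws lws; rewrite cfg_id; last by move=> s [].
  split=> [[_ [_ /(existential_preE ex lws)]] //|cq].
  split; first by rewrite size_map; exact: CQ_size.
  split; first by move=> S /mapP [w /lws lw ->]; exact: lab_pre.
  exact/(existential_preE ex lws).
exact: existential_perm.
Qed.

Section Maximal.
Hypothesis max : maximal_presentation P' Q sg CP CQ.

Lemma cand_pre ws : CQ ws -> cand P CT n (map pre ws).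
Proof.
move=> cq; have lws := CQ_lab cq; split; first by rewrite size_map; exact: CQ_size.
split; first by move=> S /mapP [w /lws lw ->]; exact: pre_nesub.
move=> l /is_choice_preE [ll sl]; apply/CT_f; split=> //.
by case: max => cand _ _ _; exact: cand cq sl.
Qed.

Lemma pre_complete ws w x : CQ (rcons ws w) -> plab P x ->
  (forall l, is_choice l (map pre ws) -> CT (rcons l x)) -> x \in pre w.
Proof.
move=> cq lx ch; apply/preP; split=> //.
case: max => _ compl _ _; apply: (compl ws w (f x) cq); first by apply/f_lab; exists x.
have lws : all_lab Q ws.
  by move=> w' w'ws; apply: (CQ_lab cq); rewrite mem_rcons in_cons w'ws orbT.
by move=> us /(sg_choice_lift lws) [l /ch /CT_f [_ cp] <-]; rewrite -map_rcons.
Qed.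

Lemma cand_above_pre ws t : CQ ws -> cand P CT n t ->
  all2 (fun S S' : {set T} => S \subset S') (map pre ws) t -> t = map pre ws.
Proof.
move=> cq [_ [ne ch]] sub; apply/all2_eq_map; rewrite all2_flip.
have sz : size ws = size t by rewrite -(all2_size sub) size_map.
apply: all2_pointwise sz _ => ws1 w ws2 t1 S t2 ews et e1.
move: sub; rewrite ews et map_cat all2_cat ?size_map //= => /andP [sub1 /andP [wS sub2]].
rewrite eqEsubset wS andbT; apply/subsetP => x xS.
have lx : plab P x.
  by case: (ne S) => [|_ /(_ x xS) //]; rewrite et mem_cat in_cons eqxx orbT.
apply: (pre_complete (ws := ws1 ++ ws2)) lx _.
  by apply: CQ_perm cq; rewrite ews perm_rcons_mid.
move=> l; rewrite map_cat => /is_choice_cat [l1 [l2 [-> c1 c2]]].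
have := is_choice_subset c1 sub1; have := is_choice_subset c2 sub2.
rewrite /is_choice => c2' c1'.
apply: CT_perm (ch (l1 ++ x :: l2) _); first exact: perm_rcons_mid.
by rewrite et /is_choice all2_cat ?(all2_size c1') //= c1' xS c2'.
Qed.

Lemma cand_pre_dominated Ss : cand P CT n Ss ->
  exists2 ws, CQ ws & all2 (fun S S' : {set T} => S \subset S') Ss (map pre ws).
Proof.
move=> [_ [ne ch]]; case: max => _ _ dom _.
have img_ne : exists us, all2 (fun u (A : pred U) => A u) us (map img Ss).
  have [l hl] := is_choice_exists (fun S h => (ne S h).1).
  by exists (map f l); apply/img_choiceE; exists l.
have img_CP us : all2 (fun u (A : pred U) => A u) us (map img Ss) -> CP us.
  by case/img_choiceE => l /ch /CT_f [_ cp] <-.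
have [ws cq sub] := dom (map img Ss) img_ne img_CP.
by exists ws => //; apply: img_sub_pre.
Qed.

Lemma maximal_candE Ss :
  maximal (cand P CT n) Ss <-> exists2 ws, CQ ws & Ss = map pre ws.
Proof.
split=> [[cSs mSs]|[ws cq ->]].
  have [ws cq sub] := cand_pre_dominated cSs.
  have /perm_map_inv [ws' wsws' ->] : perm_eq Ss (map pre ws).
    by apply: mSs (cand_pre cq) _; exists (map pre ws); split.
  by exists ws' => //; apply: CQ_perm cq.
split=> [|s' cs' [t [tt' sub]]]; first exact: cand_pre.
have ct : cand P CT n t by apply: cand_perm CT_perm _ _ _ cs'; rewrite perm_sym.
by rewrite -(cand_above_pre cq ct sub).
Qed.

Lemma maximal_cand_labE S : (exists s, maximal (cand P CT n) s /\ S \in s) <->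
  exists2 w, plab Q w & S = pre w.
Proof.
split=> [[s [/maximal_candE [ws cq ->] /mapP [w wws ->]]]|[w lw ->]].
  by exists w => //; apply: (CQ_lab cq).
case: max => _ _ _ cover; have [ws cq wws] := cover w lw.
by exists (map pre ws); split; [apply/maximal_candE; exists ws|apply: map_f].
Qed.

Lemma cfg_maximal_preE ws : all_lab Q ws ->
  cfg n (maximal (cand P CT n)) (map pre ws) <-> CQ ws.
Proof.
move=> lws; rewrite cfg_id; last by move=> s [[]].
  rewrite maximal_candE; split=> [[ws' cq' /map_inj_lab e]|cq]; last by exists ws.
  by rewrite (e Q pre_inj lws (CQ_lab cq')).
exact/maximal_perm/cand_perm.
Qed.

End Maximal.
End Constraint.

Hypothesis W_inhabited : inhabited W.
Hypothesis f_node : forall l, inN P l <-> all_lab P l /\ inN P' (map f l).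
Hypothesis f_edge : forall l, Defs.inE P l <-> all_lab P l /\ Defs.inE P' (map f l).

Lemma iso_R_of_presentation :
  maximal_presentation P' Q sg (Defs.inE P') (Defs.inE Q) ->
  existential_presentation Q sg (inN P') (inN Q) -> iso (R P) Q.
Proof.
move=> max ex.
have labE : forall S, R_lab P S <-> exists2 w, plab Q w & S = pre w.
  exact: (maximal_cand_labE f_edge (@cfg_perm _ 2 _) (@cfg_perm _ 2 _) (@cfg_size _ 2 _)
                            (Q_edge_lab Qpres) max).
apply: (iso_of_inverse (g := pre)) => //.
- exact: pre_inj.
- by move=> s; apply: cfg_all_lab => s' [_ []].
- exact: (Q_node_lab Qpres).
- by move=> s; apply: cfg_all_lab => s' e S S's; exists s'.
- exact: (Q_edge_lab Qpres).
- apply: (cfg_existential_preE (lab := R_lab P) f_node (@cfg_perm _ 3 _) (@cfg_size _ 3 _)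
                               ex) => w lw.
  by apply/labE; exists w.
- exact: (cfg_maximal_preE f_edge (@cfg_perm _ 2 _) (@cfg_perm _ 2 _) (@cfg_size _ 2 _)
                           (Q_edge_lab Qpres) max).
Qed.

Lemma iso_Rbar_of_presentation :
  maximal_presentation P' Q sg (inN P') (inN Q) ->
  existential_presentation Q sg (Defs.inE P') (Defs.inE Q) -> iso (Rbar P) Q.
Proof.
move=> max ex.
have labE : forall S, Rb_lab P S <-> exists2 w, plab Q w & S = pre w.
  exact: (maximal_cand_labE f_node (@cfg_perm _ 3 _) (@cfg_perm _ 3 _) (@cfg_size _ 3 _)
                            (Q_node_lab Qpres) max).
apply: (iso_of_inverse (g := pre)) => //.
- exact: pre_inj.
- by move=> s; apply: cfg_all_lab => s' e S S's; exists s'.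
- exact: (Q_node_lab Qpres).
- by move=> s; apply: cfg_all_lab => s' [_ []].
- exact: (Q_edge_lab Qpres).
- exact: (cfg_maximal_preE f_node (@cfg_perm _ 3 _) (@cfg_perm _ 3 _) (@cfg_size _ 3 _)
                           (Q_node_lab Qpres) max).
- apply: (cfg_existential_preE (lab := Rb_lab P) f_edge (@cfg_perm _ 2 _) (@cfg_size _ 2 _)
                               ex) => w lw.
  by apply/labE; exists w.
Qed.

End Transfer.

Theorem R_iso (T : finType) (U W : eqType) (P : problem T) (P' : problem U)
    (Q : problem W) (sg : W -> pred U) :
  inhabited W -> iso P P' -> R_presentation P' Q sg -> iso (R P) Q.
Proof.
move=> W0 [f [_ [f_lab [f_node [_ [f_edge _]]]]]] [pres max ex].
exact: (iso_R_of_presentation f_lab pres W0 f_node f_edge max ex).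
Qed.

Theorem Rbar_iso (T : finType) (U W : eqType) (P : problem T) (P' : problem U)
    (Q : problem W) (sg : W -> pred U) :
  inhabited W -> iso P P' -> Rbar_presentation P' Q sg -> iso (Rbar P) Q.
Proof.
move=> W0 [f [_ [f_lab [f_node [_ [f_edge _]]]]]] [pres max ex].
exact: (iso_Rbar_of_presentation f_lab pres W0 f_node f_edge max ex).
Qed.

(** * The problems Q^k(Π) *)

Definition isB (t : tlab) := if t is TB then true else false.
Definition isC (t : tlab) := if t is TC then true else false.
Definition isDb (k : nat) (t : tlab) := if t is TD j then 0 < j <= k else false.
Definition isDk (k : nat) (t : tlab) := if t is TD j then j == k else false.

Definition tlab_in (k : nat) (t : tlab) :=
  match t with TB | TC => true | TA i => 0 < i < k | TD j => 0 < j <= k end.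

Definition tEx (k : nat) (a b : tlab) :=
  (isB a || isDb k a) && (isC b || isDb k b) ||
  if (a, b) is (TA i, TD j) then (0 < i < j) && (j <= k) else false.

Definition tE (k : nat) (a b : tlab) := tEx k a b || tEx k b a.

Definition tpair (k : nat) (a b : tlab) :=
  isB a && isC b || if (a, b) is (TA i, TD j) then (i == j) && (0 < i < k) else false.

Definition tN (k : nat) (a b c : tlab) :=
  [|| (tpair k a b || tpair k b a) && isDk k c, (tpair k a c || tpair k c a) && isDk k b
    | (tpair k b c || tpair k c b) && isDk k a].

Definition t0N (a b c : tlab) :=
  [&& all (fun t => isB t || isC t) [:: a; b; c], has isB [:: a; b; c] & has isC [:: a; b; c]].

Lemma tEC k a b : tE k a b = tE k b a.
Proof. by rewrite /tE orbC. Qed.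

Lemma tE_lab k a b : tE k a b -> tlab_in k a && tlab_in k b.
Proof.
by case/orP; case: a => [||i|i]; case: b => [||j|j]; rewrite /tEx /= ?andbF ?orbF; lia.
Qed.

Lemma tN_lab k a b c : 0 < k -> tN k a b c -> [&& tlab_in k a, tlab_in k b & tlab_in k c].
Proof.
by move=> k0; case: a => [||i|i]; case: b => [||j|j]; case: c => [||l|l];
   rewrite /tN /tpair /= ?andbF ?orbF //=; lia.
Qed.

Lemma isDP k t : isD k t <-> isDb k t.
Proof. by split=> [[j [jk ->]] //|]; case: t => // j jk; exists j. Qed.

Lemma targetk_lab k t : plab (targetk k) t <-> tlab_in k t.
Proof.
split=> [|]; first by case=> [->|[->|[[i [ik ->]]|/isDP]]] //=; [lia|case: t].
case: t => [||i|j] /= h; [left|right; left|right; right; left|right; right; right] => //.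
  by exists i; split=> //; lia.
by apply/isDP.
Qed.

Lemma targetk_all_lab k ts : all_lab (targetk k) ts <-> all (tlab_in k) ts.
Proof. by apply: all_labP => t; exact: targetk_lab. Qed.

Lemma targetk_edge k a b : Defs.inE (targetk k) [:: a; b] <-> tE k a b.
Proof.
apply: cfg2E => {}a {}b /=; split.
  case=> [[x [y [hx [hy [-> ->]]]]]|[i [j [ij [jk [-> ->]]]]]]; last by rewrite /tEx /=; lia.
  by case: hx hy => [->|/isDP hx] [->|/isDP hy]; rewrite /tEx /= ?hx ?hy ?orbT.
case/orP=> [/andP [ha hb]|]; last first.
  case: a => //= i; case: b => //= j h; right; exists i, j.
  by split; [lia|split; [lia|]].
left; exists a, b; split; [|split=> //].
  by case: a ha => //= [_|j h]; [left|right; apply/isDP].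
by case: b hb => //= [_|j h]; [left|right; apply/isDP].
Qed.

Lemma targetk_node k a b c : inN (targetk k) [:: a; b; c] <-> tN k a b c.
Proof.
have listed_nodeE : forall x y z, (x = TB /\ y = TC /\ z = TD k \/
    exists i, 1 <= i <= k - 1 /\ [:: x; y; z] = [:: TA i; TD i; TD k]) <->
    tpair k x y && isDk k z.
  move=> x y z; split.
    case=> [[-> [-> ->]]|[i [ik [-> -> ->]]]]; rewrite /tpair /= ?eqxx //=; lia.
  case: x => [||i|i]; case: y => [||j|j]; case: z => [||l|l]; rewrite /tpair //= ?andbF //.
    by move=> /eqP ->; left.
  by case/andP => /and3P [/eqP <- i0 ik] /eqP ->; right; exists i; split=> //; lia.
rewrite /inN (cfg3E (g := fun x y z => tpair k x y && isDk k z)); last first.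
  move=> x y z /=; rewrite -listed_nodeE; split.
    by case=> [[-> -> ->]|[i [ik ->]]]; [left|right; exists i].
  by case=> [[-> [-> ->]]|[i [ik ->]]]; [left|right; exists i].
rewrite /tN.
by case: (tpair k a b); case: (tpair k b a); case: (tpair k a c); case: (tpair k c a);
  case: (tpair k b c); case: (tpair k c b); case: (isDk k a); case: (isDk k b);
  case: (isDk k c).
Qed.

Lemma target0_lab t : plab target0 t <-> tlab_in 0 t.
Proof. by split=> [[->|->] //|]; case: t => [||i|i] /=; try lia; [left|right]. Qed.

Lemma target0_edge a b : Defs.inE target0 [:: a; b] <-> tE 0 a b.
Proof.
apply: cfg2E => {}a {}b /=; split=> [[-> ->] //|].
by case: a => [||i|i]; case: b => [||j|j]; rewrite /tEx /= ?andbF //; lia.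
Qed.

Lemma target0_node a b c : inN target0 [:: a; b; c] <-> t0N a b c.
Proof.
rewrite /inN (cfg3E (g := fun x y z => [&& isB x, isC y & isB z || isC z])).
  by case: a => [||?|?]; case: b => [||?|?]; case: c => [||?|?].
move=> x y z /=; split=> [[] [-> -> ->] //|].
by case: x => //; case: y => //; case: z => //= *; [left|right].
Qed.

Lemma Pi0_node s : inN Pi0 s <-> [&& size s == 3, lI \in s & lO \in s].
Proof.
rewrite /inN (cfg_id (C := pnode Pi0)) => [|s1 s2 p [sz [hI hO]]|s' [] //].
  split=> [[sz [hI hO]]|/and3P [/eqP sz hI hO] //].
  by apply/and3P; split=> //; apply/eqP.
by split; [rewrite -(perm_size p)|rewrite -!(perm_mem p)].
Qed.

Lemma Pi0_edge a b : Defs.inE Pi0 [:: a; b] <-> (~~ a && b) || (~~ b && a).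
Proof. by apply: (cfg2E (g := fun x y => ~~ x && y)) => x y; case: x; case: y. Qed.

Lemma Pi0_iso : iso Pi0 target0.
Proof.
have Pi0_lab s : all_lab Pi0 s by move=> [] _; [right|left].
apply: (iso_of_inverse (g := isC)) => //.
- exact: inhabits TB.
- by move=> x y [->|->] [->|->].
- move=> x; split=> [_|[y _ ->]]; last by case: (isC y); [right|left].
  by case: x; [exists TC; [right|]|exists TB; [left|]].
- by move=> t; apply: cfg_all_lab => s [->|->]; apply/(all_labP target0_lab).
- by move=> t; apply: cfg_all_lab => s ->; apply/(all_labP target0_lab).
- move=> t lt.
  have [sz|sz] := eqVneq (size t) 3; last first.
    by split=> /cfg_size; rewrite ?size_map => /eqP; rewrite (negbTE sz).
  case: t lt sz => [|a [|b [|c [|d t]]]] //=.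
  case/all_lab_cons => la /all_lab_cons [lb /all_lab_cons [lc _]] _.
  rewrite Pi0_node target0_node.
  by case: la => ->; case: lb => ->; case: lc => ->; rewrite /t0N /lI /lO /= ?in_cons ?in_nil.
- move=> t lt.
  have [sz|sz] := eqVneq (size t) 2; last first.
    by split=> /cfg_size; rewrite ?size_map => /eqP; rewrite (negbTE sz).
  case: t lt sz => [|a [|b [|c t]]] //= /all_lab_cons [la /all_lab_cons [lb _]] _.
  rewrite Pi0_edge target0_edge.
  by case: la => ->; case: lb => ->.
Qed.

(** * The problems R(Q^k(Π)) *)

Inductive rlab := RU | RV | RX of nat | RY of nat.

Definition rlab_eq_dec (x y : rlab) : {x = y} + {x <> y}.
Proof. decide equality; exact: (decP eqP). Defined.
HB.instance Definition rlab_hasDecEq := comparableMixin rlab_eq_dec.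

Definition rlab_in (k : nat) (w : rlab) :=
  match w with RU | RV => true | RX i | RY i => i < k end.

(* Compatible labels: their sets contain B and C, or A_j and D_j. *)
Definition comp (a b : rlab) :=
  match a, b with
  | RY _, RY _ | RY _, RU | RY _, RV | RU, RY _ | RV, RY _ | RU, RV | RV, RU => true
  | RY i, RX l | RX l, RY i => l < i
  | _, _ => false
  end.

Definition rnode (k : nat) (a b c : rlab) :=
  [&& rlab_in k a, rlab_in k b, rlab_in k c & comp a b || comp a c || comp b c].

Definition redge (k : nat) (a b : rlab) :=
  match a, b with
  | RU, RV | RV, RU => true
  | RX i, RY j | RY j, RX i => (i == j) && (i < k)
  | _, _ => false
  end.

Definition rtarget (k : nat) : problem rlab :=
  Problem (rlab_in k)
          (fun s => if s is [:: a; b; c] then rnode k a b c else False)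
          (fun s => if s is [:: a; b] then redge k a b else False).

Lemma compC a b : comp a b = comp b a.
Proof. by case: a => [||i|i]; case: b => [||j|j]. Qed.

Lemma redgeC k a b : redge k a b = redge k b a.
Proof. by case: a => [||i|i]; case: b => [||j|j]. Qed.

Lemma rnode_perm k a b c :
  [/\ rnode k a c b = rnode k a b c, rnode k b a c = rnode k a b c,
      rnode k b c a = rnode k a b c, rnode k c a b = rnode k a b c
    & rnode k c b a = rnode k a b c].
Proof.
rewrite /rnode (compC b a) (compC c a) (compC c b).
by split; case: (rlab_in k a); case: (rlab_in k b); case: (rlab_in k c);
   case: (comp a b); case: (comp a c); case: (comp b c).
Qed.

Lemma rtarget_node k a b c : inN (rtarget k) [:: a; b; c] <-> rnode k a b c.
Proof.
rewrite /inN (cfg3E (g := rnode k)) //.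
by have [-> -> -> -> ->] := rnode_perm k a b c; rewrite !orbb.
Qed.

Lemma rtarget_edge k a b : Defs.inE (rtarget k) [:: a; b] <-> redge k a b.
Proof. by rewrite /Defs.inE (cfg2E (g := redge k)) // redgeC orbb. Qed.

Lemma rtarget_all_lab k ws : all_lab (rtarget k) ws <-> all (rlab_in k) ws.
Proof. exact: all_labP. Qed.

Lemma rtarget_node_lab k ws : inN (rtarget k) ws -> all_lab (rtarget k) ws.
Proof.
apply: cfg_all_lab => -[|a [|b [|c [|? ?]]]] //= /and4P [la lb lc _].
by apply/rtarget_all_lab; rewrite /= la lb lc.
Qed.

Lemma redge_lab k a b : redge k a b -> rlab_in k a && rlab_in k b.
Proof. by case: a => [||i|i]; case: b => [||j|j] //= /andP [/eqP <- ->]. Qed.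

Lemma rtarget_edge_lab k ws : Defs.inE (rtarget k) ws -> all_lab (rtarget k) ws.
Proof.
apply: cfg_all_lab => -[|a [|b [|? ?]]] //= /redge_lab lab.
by apply/rtarget_all_lab; rewrite /= andbT.
Qed.

Definition rlab_set (k : nat) (w : rlab) (t : tlab) :=
  match w with
  | RU => isB t || isDb k t
  | RV => isC t || isDb k t
  | RX i => if t is TD j then (i < j) && (j <= k) else false
  | RY i => [|| isB t, isC t, isDb k t | if t is TA j then 0 < j <= i else false]
  end.

Lemma rlab_set_lab k w t : rlab_in k w -> rlab_set k w t -> tlab_in k t.
Proof. by case: w => [||i|i]; case: t => [||j|j] //=; lia. Qed.

Lemma rlab_set_nonempty k w : rlab_in k w -> exists t, rlab_set k w t.
Proof.
by case: w => [||i|i] /= h; [exists TB|exists TC|exists (TD k)|exists TB] => //=; lia.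
Qed.

Lemma rlab_set_inj k w w' :
  rlab_in k w -> rlab_in k w' -> rlab_set k w =1 rlab_set k w' -> w = w'.
Proof.
move=> lw lw' e.
case: w lw e => [||i|i] lw e; case: w' lw' e => [||j|j] lw' e //;
  move: lw lw' (e TB) (e TC) (e (TD k)) => /=; try lia.
- move: (e (TD i.+1)) (e (TD j.+1)) => /= *; suff -> : i = j by []; lia.
- move: (e (TA i)) (e (TA j)) => /= *; suff -> : i = j by []; lia.
Qed.

Lemma redge_tE k w1 w2 a b : redge k w1 w2 -> rlab_set k w1 a -> rlab_set k w2 b -> tE k a b.
Proof.
case: w1 => [||i|i]; case: w2 => [||j|j] //=;
  case: a => [||x|x]; case: b => [||y|y] //=; rewrite /tE /tEx /=; lia.
Qed.

Lemma redge_complete k w1 w2 u : redge k w1 w2 -> tlab_in k u ->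
  (forall a, rlab_set k w1 a -> tE k a u) -> rlab_set k w2 u.
Proof.
case: w1 => [||i|i]; case: w2 => [||j|j] //= e lu H.
- by move: (H TB isT) lu; case: u {H} => [||x|x] //=; rewrite /tE /tEx /=; lia.
- by move: (H TC isT) lu; case: u {H} => [||x|x] //=; rewrite /tE /tEx /=; lia.
- have ij : j = i by lia.
  have hi : (i < i.+1) && (i.+1 <= k) by lia.
  by move: (H (TD i.+1) hi) lu; case: u {H} => [||x|x] //=; rewrite /tE /tEx /=; lia.
- have ij : j = i by lia.
  move: (H TB isT) (H TC isT) lu; case: u H => [||x|x] H //=; rewrite /tE /tEx /=; try lia.
  move=> _ _ hx; case: i e ij H => [|i] e ij H; first lia.
  by move: (H (TA i.+1)) => /=; rewrite /tE /tEx /=; lia.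
Qed.

Lemma redge_partner k w : rlab_in k w -> exists w', redge k w w'.
Proof.
by case: w => [||i|i] lw; [exists RV|exists RU|exists (RY i)|exists (RX i)]; rewrite /= ?eqxx.
Qed.

Lemma dominated_by_YX k (A B : pred tlab) : (exists b, B b) ->
  (forall b, B b -> isDb k b) -> (forall a b, A a -> B b -> tE k a b) ->
  exists2 i, i < k & (forall a, A a -> rlab_set k (RY i) a) /\
                     (forall b, B b -> rlab_set k (RX i) b).
Proof.
move=> [b0 Bb0] BD AB.
have hex : exists j, B (TD j) by move: (BD _ Bb0); case: b0 Bb0 => // j Bj _; exists j.
case: (ex_minnP hex) => j Bj jmin; have /= Dj := BD _ Bj.
exists j.-1; first lia.
split=> [a Aa|b Bb].
  have e := AB _ _ Aa Bj; move: e (tE_lab e).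
  by case: a {Aa} => [||x|x] //=; rewrite /tE /tEx /=; lia.
move: (BD _ Bb); case: b Bb => // l Bl /= hl.
by have := jmin l Bl; lia.
Qed.

Lemma tE_BC k a :
  (tE k a TC -> rlab_set k RU a) /\ (tE k a TB -> rlab_set k RV a).
Proof.
by split=> e; move: e (tE_lab e); case: a => [||x|x]; rewrite /tE /tEx /=; lia.
Qed.

Lemma rtarget_dominates k (A B : pred tlab) : (exists a, A a) -> (exists b, B b) ->
  (forall a b, A a -> B b -> tE k a b) ->
  exists w1 w2, [/\ redge k w1 w2, forall a, A a -> rlab_set k w1 a
                 & forall b, B b -> rlab_set k w2 b].
Proof.
move=> nA nB AB.
have BA b a : B b -> A a -> tE k b a by move=> Bb Aa; rewrite tEC; exact: AB.
(* Unless one family consists of D's (handled by its least D_j), the non-D labels of A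
   and B can only form the pair B C. *)
case: (classic (forall b, B b -> isDb k b)) => [BD|/not_all_ex [b1 Bb1 nb1]].
  have [i ik [sA sB]] := dominated_by_YX nB BD AB.
  by exists (RY i), (RX i); split=> //=; rewrite eqxx.
case: (classic (forall a, A a -> isDb k a)) => [AD|/not_all_ex [a1 Aa1 na1]].
  have [i ik [sB sA]] := dominated_by_YX nA AD BA.
  by exists (RX i), (RY i); split=> //=; rewrite eqxx.
have e11 := AB _ _ Aa1 Bb1; move: e11 na1 nb1 (tE_lab e11) Aa1 Bb1.
case: a1 => [||x|x]; case: b1 => [||y|y]; rewrite /tE /tEx /= ?andbF //=; try lia.
- move=> _ _ _ _ AB1 BC1; exists RU, RV; split=> // [a Aa|b Bb].
    exact: (tE_BC k a).1 (AB _ _ Aa BC1).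
  exact: (tE_BC k b).2 (BA _ _ Bb AB1).
- move=> _ _ _ _ AC1 BB1; exists RV, RU; split=> // [a Aa|b Bb].
    exact: (tE_BC k a).2 (AB _ _ Aa BB1).
  exact: (tE_BC k b).1 (BA _ _ Bb AC1).
Qed.

Lemma tpair_comp k w w' u u' : rlab_set k w u -> rlab_set k w' u' ->
  tpair k u u' || tpair k u' u -> comp w w'.
Proof.
have one x x' y y' : rlab_set k x y -> rlab_set k x' y' -> tpair k y y' -> comp x x'.
  rewrite /tpair; case: y => [||i|i]; case: y' => [||j|j] //=;
    case: x => [||a|a]; case: x' => [||b|b] //=; lia.
by move=> s s' /orP [/(one _ _ _ _ s s') //|/(one _ _ _ _ s' s)]; rewrite compC.
Qed.

Lemma comp_tpair k w w' : rlab_in k w -> rlab_in k w' -> comp w w' ->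
  exists u u', [/\ rlab_set k w u, rlab_set k w' u' & tpair k u u' || tpair k u' u].
Proof.
case: w => [||i|i]; case: w' => [||j|j] //= lw lw' c.
all: first [ (exists TB, TC; split; rewrite /tpair //=; lia)
           | (exists TC, TB; split; rewrite /tpair //=; lia)
           | (exists (TD j), (TA j); split; rewrite /tpair //=; lia)
           | (exists (TA i), (TD i); split; rewrite /tpair //=; lia) ].
Qed.

Lemma rlab_set_Dk k w : 0 < k -> rlab_in k w -> rlab_set k w (TD k).
Proof. by case: w => [||i|i] /=; lia. Qed.

Lemma rnode_targetkE k w1 w2 w3 : 0 < k -> rlab_in k w1 -> rlab_in k w2 -> rlab_in k w3 ->
  rnode k w1 w2 w3 <-> exists u1 u2 u3,
    [/\ rlab_set k w1 u1, rlab_set k w2 u2, rlab_set k w3 u3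
      & inN (targetk k) [:: u1; u2; u3]].
Proof.
move=> k0 l1 l2 l3; rewrite /rnode l1 l2 l3 /=; split.
  case/orP => [/orP [c|c]|c].
  - have [u [u' [s s' p]]] := comp_tpair l1 l2 c.
    exists u, u', (TD k); split=> //; first exact: rlab_set_Dk.
    by apply/targetk_node; rewrite /tN p /= eqxx.
  - have [u [u' [s s' p]]] := comp_tpair l1 l3 c.
    exists u, (TD k), u'; split=> //; first exact: rlab_set_Dk.
    by apply/targetk_node; rewrite /tN p /= eqxx orbT.
  - have [u [u' [s s' p]]] := comp_tpair l2 l3 c.
    exists (TD k), u, u'; split=> //; first exact: rlab_set_Dk.
    by apply/targetk_node; rewrite /tN p /= eqxx !orbT.
case=> u1 [u2 [u3 [s1 s2 s3 /targetk_node]]].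
case/or3P => [/andP [p _]|/andP [p _]|/andP [p _]].
- by rewrite (tpair_comp s1 s2 p).
- by rewrite (tpair_comp s1 s3 p) orbT.
- by rewrite (tpair_comp s2 s3 p) !orbT.
Qed.

Lemma rnode_target0E w1 w2 w3 : rlab_in 0 w1 -> rlab_in 0 w2 -> rlab_in 0 w3 ->
  rnode 0 w1 w2 w3 <-> exists u1 u2 u3,
    [/\ rlab_set 0 w1 u1, rlab_set 0 w2 u2, rlab_set 0 w3 u3 & inN target0 [:: u1; u2; u3]].
Proof.
move=> l1 l2 l3.
suff -> : rnode 0 w1 w2 w3 <->
  exists u1 u2 u3, [/\ rlab_set 0 w1 u1, rlab_set 0 w2 u2, rlab_set 0 w3 u3 & t0N u1 u2 u3].
  by split=> -[u1 [u2 [u3 [s1 s2 s3 /target0_node n]]]]; exists u1, u2, u3.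
case: w1 l1 => [||i|i] //; case: w2 l2 => [||j|j] //; case: w3 l3 => [||l|l] //= _ _ _;
  rewrite /rnode /=; split=> //;
  try (by [exists TB, TC, TB | exists TB, TC, TC | exists TB, TB, TC | exists TC, TB, TB
          | exists TC, TC, TB | exists TC, TB, TC]);
  case=> u1 [u2 [u3 []]]; case: u1 => [||x|x]; case: u2 => [||y|y]; case: u3 => [||z|z] //=.
Qed.

Section RStep.
Variables (k : nat) (P' : problem tlab).
Hypothesis P'_lab : forall t, plab P' t <-> tlab_in k t.
Hypothesis P'_edge : forall a b, Defs.inE P' [:: a; b] <-> tE k a b.
Hypothesis P'_node : forall w1 w2 w3, rlab_in k w1 -> rlab_in k w2 -> rlab_in k w3 ->
  rnode k w1 w2 w3 <->
  exists u1 u2 u3,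
    [/\ rlab_set k w1 u1, rlab_set k w2 u2, rlab_set k w3 u3 & inN P' [:: u1; u2; u3]].

Lemma rtarget_presentation : presentation P' (rtarget k) (rlab_set k).
Proof.
split; [exact: rlab_set_nonempty| |exact: rlab_set_inj|exact: rtarget_node_lab|].
  by move=> w u lw /(rlab_set_lab lw) /P'_lab.
exact: rtarget_edge_lab.
Qed.

Lemma rtarget_edge_maximal :
  maximal_presentation P' (rtarget k) (rlab_set k) (Defs.inE P') (Defs.inE (rtarget k)).
Proof.
split.
- move=> ws us e hus; have sz := cfg_size e; have := all2_size hus; rewrite sz.
  case: ws sz e hus => [|w1 [|w2 [|? ?]]] //= _ /rtarget_edge e hus.
  rewrite /sg_choice in hus.
  case: us hus => [|a [|b [|? ?]]] //= /and3P [s1 s2 _] _.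
  by apply/P'_edge; exact: redge_tE e s1 s2.
- move=> ws w u e /P'_lab lu H; have := cfg_size e; rewrite size_rcons.
  case: ws e H => [|w1 [|? ?]] //= /rtarget_edge e H _.
  by apply: redge_complete e lu _ => a sa; apply/P'_edge/(H [:: a]); rewrite /sg_choice /= sa.
- move=> As [us hus] compat; have sz := cfg_size (compat us hus).
  have := all2_size hus; rewrite sz.
  case: As hus compat => [|A [|B [|? ?]]] //= hus compat _.
  case: us sz hus compat => [|a [|b [|? ?]]] //= _ /and3P [Aa Bb _] compat.
  have AB a' b' : A a' -> B b' -> tE k a' b'.
    by move=> Aa' Bb'; apply/P'_edge/compat; rewrite /= Aa' Bb'.
  have [w1 [w2 [e s1 s2]]] := rtarget_dominates (ex_intro _ a Aa) (ex_intro _ b Bb) AB.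
  exists [:: w1; w2]; first exact/rtarget_edge.
  by constructor; [exact: s1|constructor; [exact: s2|constructor]].
- move=> w lw; have [w' e] := redge_partner lw.
  by exists [:: w; w']; [apply/rtarget_edge|exact: mem_head].
Qed.

Lemma rtarget_node_existential :
  existential_presentation (rtarget k) (rlab_set k) (inN P') (inN (rtarget k)).
Proof.
move=> ws /rtarget_all_lab lws; split.
  case=> us hus n; have sz := cfg_size n; have := all2_size hus; rewrite sz.
  case: ws lws hus => [|w1 [|w2 [|w3 [|? ?]]]] //= /and4P [l1 l2 l3 _] hus _.
  rewrite /sg_choice in hus.
  case: us sz hus n => [|a [|b [|c [|? ?]]]] //= _ /and4P [s1 s2 s3 _] n.
  by apply/rtarget_node/P'_node => //; exists a, b, c.
move=> n; have := cfg_size n.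
case: ws lws n => [|w1 [|w2 [|w3 [|? ?]]]] //= /and4P [l1 l2 l3 _] /rtarget_node n _.
have [u1 [u2 [u3 [s1 s2 s3 n']]]] := (P'_node l1 l2 l3).1 n.
by exists [:: u1; u2; u3]; rewrite // /sg_choice /= s1 s2 s3.
Qed.

Lemma R_presentation_rtarget : R_presentation P' (rtarget k) (rlab_set k).
Proof.
split; [exact: rtarget_presentation|exact: rtarget_edge_maximal|].
exact: rtarget_node_existential.
Qed.

End RStep.

(** * The problems Rbar(R(Q^k(Π))) *)

Definition isU (w : rlab) := if w is RU then true else false.
Definition isV (w : rlab) := if w is RV then true else false.
Definition isY (k : nat) (w : rlab) := if w is RY j then j < k else false.

Definition tlab_set (k : nat) (t : tlab) (w : rlab) :=
  match t with
  | TB => isY k w || isU w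
  | TC => isY k w || isV w
  | TA m => if w is RY j then (m.-1 <= j) && (j < k) else false
  | TD m => [|| isY k w, isU w, isV w | if w is RX j then (j < m.-1) && (j < k) else false]
  end.

Lemma tlab_set_lab k t w : tlab_set k t w -> rlab_in k w.
Proof. by case: t => [||i|i]; case: w => [||j|j] //=; lia. Qed.

Lemma tlab_set_nonempty k t : tlab_in k.+1 t -> exists w, tlab_set k t w.
Proof.
by case: t => [||i|i] /= h; [exists RU|exists RV|exists (RY k.-1)|exists RU] => //=; lia.
Qed.

Lemma tlab_set_inj k t t' :
  tlab_in k.+1 t -> tlab_in k.+1 t' -> tlab_set k t =1 tlab_set k t' -> t = t'.
Proof.
move=> lt lt' e.
case: t lt e => [||i|i] lt e; case: t' lt' e => [||j|j] lt' e //;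
  move: lt lt' (e RU) (e RV) => /=; try lia.
- move: (e (RY i.-1)) (e (RY j.-1)) => /= *; suff -> : i = j by []; lia.
- move: (e (RX i.-1)) (e (RX j.-1)) => /= *; suff -> : i = j by []; lia.
Qed.

Lemma tlab_set_Dtop k w : rlab_in k w -> tlab_set k (TD k.+1) w.
Proof. by case: w => [||j|j] /=; lia. Qed.

Lemma tE_redge k t1 t2 : tlab_in k.+1 t1 -> tlab_in k.+1 t2 ->
  tE k.+1 t1 t2 <-> exists u1 u2, [/\ tlab_set k t1 u1, tlab_set k t2 u2 & redge k u1 u2].
Proof.
move=> l1 l2; split; last first.
  case=> u1 [u2 []]; case: u1 => [||i|i]; case: u2 => [||j|j] //=;
    case: t1 l1 => [||x|x]; case: t2 l2 => [||y|y] //=; rewrite /tE /tEx /=; lia.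
rewrite /tE /tEx; case: t1 l1 => [||i|i]; case: t2 l2 => [||j|j] //= l1 l2 h.
all: first [ (exists RU, RV; split=> //=; lia) | (exists RV, RU; split=> //=; lia)
           | (exists (RY i.-1), (RX i.-1); split=> //=; rewrite ?eqxx; lia)
           | (exists (RX j.-1), (RY j.-1); split=> //=; rewrite ?eqxx; lia) ].
Qed.

Lemma tpair_tlab_set_comp k t t' a b : tlab_set k t a -> tlab_set k t' b ->
  tpair k.+1 t t' || tpair k.+1 t' t -> comp a b.
Proof.
have one x x' y y' : tlab_set k x y -> tlab_set k x' y' -> tpair k.+1 x x' -> comp y y'.
  rewrite /tpair; case: x => [||i|i]; case: x' => [||j|j] //=;
    case: y => [||p|p]; case: y' => [||q|q] //=; lia.
by move=> s s' /orP [/(one _ _ _ _ s s') //|/(one _ _ _ _ s' s)]; rewrite compC.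
Qed.

Lemma tN_tlab_set_rnode k t1 t2 t3 a b c : tN k.+1 t1 t2 t3 ->
  tlab_set k t1 a -> tlab_set k t2 b -> tlab_set k t3 c -> rnode k a b c.
Proof.
move=> n sa sb sc; rewrite /rnode (tlab_set_lab sa) (tlab_set_lab sb) (tlab_set_lab sc) /=.
case/or3P: n => [/andP [p _]|/andP [p _]|/andP [p _]].
- by rewrite (tpair_tlab_set_comp sa sb p).
- by rewrite (tpair_tlab_set_comp sa sc p) orbT.
- by rewrite (tpair_tlab_set_comp sb sc p) !orbT.
Qed.

Lemma tpair_complete k t t' u : tpair k.+1 t t' || tpair k.+1 t' t -> rlab_in k u ->
  (forall a b, tlab_set k t a -> tlab_set k (TD k.+1) b -> rnode k a b u) -> tlab_set k t' u.
Proof.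
rewrite /tpair; case: t => [||i|i]; case: t' => [||j|j] //= p lu H.
- by move: (H RU RU isT isT) lu; rewrite /rnode; case: u {H} => [||x|x] //=; lia.
- by move: (H RV RV isT isT) lu; rewrite /rnode; case: u {H} => [||x|x] //=; lia.
- have h1 : tlab_set k (TA i) (RY i.-1) by rewrite /=; lia.
  have h2 : tlab_set k (TD k.+1) (RX k.-1) by rewrite /=; lia.
  have ji : j = i by lia.
  subst j; move: (H (RY i.-1) (RX k.-1) h1 h2) lu; rewrite /rnode.
  by case: u {H} => [||x|x] //=; lia.
- have h2 : tlab_set k (TD k.+1) (RX k.-1) by rewrite /=; lia.
  have ji : j = i by lia.
  subst j; have hU := H RU (RX k.-1) isT h2; have hV := H RV (RX k.-1) isT h2.
  case: (ltnP 1 i) => hi.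
    have h3 : tlab_set k (TD i) (RX i.-2) by rewrite /=; lia.
    move: (H (RX i.-2) (RX k.-1) h3 h2) hU hV lu; rewrite /rnode.
    by case: u {H} => [||x|x] //=; lia.
  by move: hU hV lu; rewrite /rnode; case: u {H} => [||x|x] //=; lia.
Qed.

Lemma isDk_eq k t : isDk k t -> t = TD k.
Proof. by case: t => // j /eqP ->. Qed.

Lemma tN_complete k t1 t2 t3 u : tN k.+1 t1 t2 t3 -> rlab_in k u ->
  (forall a b, tlab_set k t1 a -> tlab_set k t2 b -> rnode k a b u) -> tlab_set k t3 u.
Proof.
move=> n lu H.
case/or3P: n => [/andP [p /isDk_eq ->]|/andP [p /isDk_eq e]|/andP [p /isDk_eq e]].
- exact: tlab_set_Dtop.
- by subst t2; apply: tpair_complete p lu H.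
- subst t1; apply: tpair_complete p lu _ => a b sa sb.
  by have [_ <- _ _ _] := rnode_perm k a b u; apply: H.
Qed.

Lemma tN_perm k a b c : tN k a c b = tN k a b c /\ tN k b a c = tN k a b c.
Proof.
rewrite /tN; split;
by case: (tpair k a b); case: (tpair k b a); case: (tpair k a c); case: (tpair k c a);
   case: (tpair k b c); case: (tpair k c b);
   case: (isDk k a); case: (isDk k b); case: (isDk k c).
Qed.

Lemma tN_BC k : tN k.+1 TB TC (TD k.+1).
Proof. by rewrite /tN /tpair /= eqxx. Qed.

Lemma tN_AD k j : j < k -> tN k.+1 (TA j.+1) (TD j.+1) (TD k.+1).
Proof. by move=> jk; rewrite /tN /tpair /= !eqxx /=; lia. Qed.

Section TargetCover.
Variable k : nat.
Implicit Types A B C : pred rlab.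

Definition rcompat A B C := forall a b c, A a -> B b -> C c -> rnode k a b c.

Definition tcover A B C := exists t1 t2 t3,
  [/\ tN k.+1 t1 t2 t3, forall a, A a -> tlab_set k t1 a,
      forall b, B b -> tlab_set k t2 b & forall c, C c -> tlab_set k t3 c].

Lemma rcompat12 A B C : rcompat A B C -> rcompat B A C.
Proof. by move=> H b a c Bb Aa Cc; have [_ -> _ _ _] := rnode_perm k a b c; apply: H. Qed.

Lemma rcompat23 A B C : rcompat A B C -> rcompat A C B.
Proof. by move=> H a c b Aa Cc Bb; have [-> _ _ _ _] := rnode_perm k a b c; apply: H. Qed.

Lemma tcover12 A B C : tcover B A C -> tcover A B C.
Proof.
case=> t2 [t1 [t3 [n s2 s1 s3]]]; exists t1, t2, t3; split=> //.
by case: (tN_perm k.+1 t2 t1 t3) => _ ->.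
Qed.

Lemma tcover23 A B C : tcover A C B -> tcover A B C.
Proof.
case=> t1 [t3 [t2 [n s1 s3 s2]]]; exists t1, t2, t3; split=> //.
by case: (tN_perm k.+1 t1 t3 t2) => ->.
Qed.

Lemma tcover_allY A B C : (exists a, A a) -> (exists b, B b) -> (exists c, C c) ->
  rcompat A B C -> (forall a, A a -> isY k a) -> tcover A B C.
Proof.
move=> [a0 Aa0] [b0 Bb0] [c0 Cc0] H AY.
(* j is the least index of a Y in A, so that A lies in [A_(j+1)]; a label X_l with
   j <= l in B is incompatible with Y_j, which forces C into [D_(j+1)]. *)
have hex : exists j, A (RY j) by move: (AY _ Aa0); case: a0 Aa0 => // j Aj _; exists j.
case: (ex_minnP hex) => j Aj jmin; have jk : j < k := AY _ Aj.
have sA a : A a -> tlab_set k (TA j.+1) a.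
  by move=> Aa; move: (AY _ Aa); case: a Aa => // x Ax /= xk; have := jmin x Ax; lia.
have n := tN_AD jk.
case: (classic (forall l, B (RX l) -> l < j)) => [BX|].
  exists (TA j.+1), (TD j.+1), (TD k.+1); split=> // [b Bb|c Cc]; last first.
    by case/and4P: (H _ _ _ Aa0 Bb0 Cc); case: c Cc => [||x|x] _ /=; lia.
  case/and4P: (H _ _ _ Aa0 Bb Cc0) => _ lb _ _.
  by move: lb; case: b Bb => [||x|x] Bb //= lb; try have := BX _ Bb; lia.
move/(not_all_ex (p := fun l => l < j)) => [l Bl lj].
exists (TA j.+1), (TD k.+1), (TD j.+1); split=> // [|b Bb|c Cc].
- by case: (tN_perm k.+1 (TA j.+1) (TD j.+1) (TD k.+1)) => ->.
- by case/and4P: (H _ _ _ Aa0 Bb Cc0); case: b Bb => [||x|x] _ /=; lia.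
- by move: (H _ _ _ Aj Bl Cc) lj; rewrite /rnode; case: c Cc => [||x|x] _ //=; lia.
Qed.

Lemma tcover_BC A B C : (forall a, A a -> tlab_set k TB a) ->
  (forall b, B b -> tlab_set k TC b) -> (forall c, C c -> rlab_in k c) -> tcover A B C.
Proof.
move=> sA sB lC; exists TB, TC, (TD k.+1); split=> //; first exact: tN_BC.
by move=> c /lC /tlab_set_Dtop.
Qed.

Lemma tcover_X A B C : (exists2 a, A a & ~~ isY k a) -> (exists2 b, B b & ~~ isY k b) ->
  (exists l, C (RX l)) -> rcompat A B C -> tcover A B C.
Proof.
move=> [a0 Aa0 na0] [b0 Bb0 nb0] [l Cl] H.
(* Against X_l, the non-Y labels of A and B must form the compatible pair U V. *)
have UV a b : A a -> B b -> ~~ isY k a -> ~~ isY k b -> isU a && isV b || isV a && isU b.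
  move=> Aa Bb; move: (H _ _ _ Aa Bb Cl); rewrite /rnode.
  by case: a {Aa} => [||x|x]; case: b {Bb} => [||y|y] //=; lia.
have lC c : C c -> rlab_in k c by move=> Cc; case/and4P: (H _ _ _ Aa0 Bb0 Cc).
case/orP: (UV _ _ Aa0 Bb0 na0 nb0) => /andP [h1 h2].
  apply: tcover_BC lC => [a Aa|b Bb].
    case: (boolP (isY k a)) => ya; first by rewrite /= ya.
    by move: (UV _ _ Aa Bb0 ya nb0) h2; case: a {Aa ya} => [||x|x]; case: b0 {Bb0 nb0 h1}.
  case: (boolP (isY k b)) => yb; first by rewrite /= yb.
  by move: (UV _ _ Aa0 Bb na0 yb) h1; case: b {Bb yb} => [||x|x]; case: a0 {Aa0 na0 h2}.
apply: tcover12; apply: tcover_BC lC => [b Bb|a Aa].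
  case: (boolP (isY k b)) => yb; first by rewrite /= yb.
  by move: (UV _ _ Aa0 Bb na0 yb) h1; case: b {Bb yb} => [||x|x]; case: a0 {Aa0 na0 h2}.
case: (boolP (isY k a)) => ya; first by rewrite /= ya.
by move: (UV _ _ Aa Bb0 ya nb0) h2; case: a {Aa ya} => [||x|x]; case: b0 {Bb0 nb0 h1}.
Qed.

Lemma sub_tlab_set_BC (S : pred rlab) :
  (forall x, S x -> rlab_in k x) -> (forall l, ~~ S (RX l)) ->
  (~~ S RV -> forall x, S x -> tlab_set k TB x) /\
  (~~ S RU -> forall x, S x -> tlab_set k TC x).
Proof.
move=> lS nX; split=> nUV x Sx; have := lS _ Sx;
  case: x Sx => [||j|j] Sx /= lx; rewrite ?Sx ?lx // in nUV *; by move: (nX j); rewrite Sx.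
Qed.

Lemma tcover_UV A B C :
  (exists2 a, A a & ~~ isY k a) -> (exists2 b, B b & ~~ isY k b) ->
  (exists2 c, C c & ~~ isY k c) -> (forall l, ~~ A (RX l)) -> (forall l, ~~ B (RX l)) ->
  (forall l, ~~ C (RX l)) -> rcompat A B C -> tcover A B C.
Proof.
move=> [a0 Aa0 na0] [b0 Bb0 nb0] [c0 Cc0 nc0] xA xB xC H.
have lA a : A a -> rlab_in k a by move=> Aa; case/and4P: (H _ _ _ Aa Bb0 Cc0).
have lB b : B b -> rlab_in k b by move=> Bb; case/and4P: (H _ _ _ Aa0 Bb Cc0).
have lC c : C c -> rlab_in k c by move=> Cc; case/and4P: (H _ _ _ Aa0 Bb0 Cc).
have [A_B A_C] := sub_tlab_set_BC lA xA.
have [B_B B_C] := sub_tlab_set_BC lB xB.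
have [C_B C_C] := sub_tlab_set_BC lC xC.
have UorV (S : pred rlab) s0 : (forall x, S x -> rlab_in k x) -> S s0 -> ~~ isY k s0 ->
    (forall l, ~~ S (RX l)) -> S RU || S RV.
  move=> lS Ss0; have := lS _ Ss0; case: s0 Ss0 => [||j|j] Ss0 /= lj ny nX;
    [by rewrite Ss0|by rewrite Ss0 orbT|by move: (nX j); rewrite Ss0|by rewrite lj in ny].
(* U U U and V V V are not compatible, so some family misses U and another misses V. *)
have hU : [|| ~~ A RU, ~~ B RU | ~~ C RU].
  by rewrite -!negb_and; apply/negP => /and3P [a b c]; move: (H _ _ _ a b c).
have hV : [|| ~~ A RV, ~~ B RV | ~~ C RV].
  by rewrite -!negb_and; apply/negP => /and3P [a b c]; move: (H _ _ _ a b c).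
case/or3P: hU => uS; case/or3P: hV => vS.
- by move: (UorV _ _ lA Aa0 na0 xA); rewrite (negbTE uS) (negbTE vS).
- exact: tcover12 (tcover_BC (B_B vS) (A_C uS) lC).
- exact: tcover23 (tcover12 (tcover_BC (C_B vS) (A_C uS) lB)).
- exact: tcover_BC (A_B vS) (B_C uS) lC.
- by move: (UorV _ _ lB Bb0 nb0 xB); rewrite (negbTE uS) (negbTE vS).
- exact: tcover12 (tcover23 (tcover12 (tcover_BC (C_B vS) (B_C uS) lA))).
- exact: tcover23 (tcover_BC (A_B vS) (C_C uS) lB).
- exact: tcover12 (tcover23 (tcover_BC (B_B vS) (C_C uS) lA)).
- by move: (UorV _ _ lC Cc0 nc0 xC); rewrite (negbTE uS) (negbTE vS).
Qed.

Lemma tcover_all A B C : (exists a, A a) -> (exists b, B b) -> (exists c, C c) ->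
  rcompat A B C -> tcover A B C.
Proof.
move=> nA nB nC H.
case: (classic (forall a, A a -> isY k a)) => [AY|/not_all_ex nA'].
  exact: tcover_allY.
case: (classic (forall b, B b -> isY k b)) => [BY|/not_all_ex nB'].
  exact: tcover12 (tcover_allY nB nA nC (rcompat12 H) BY).
case: (classic (forall c, C c -> isY k c)) => [CY|/not_all_ex nC'].
  exact: tcover23 (tcover12 (tcover_allY nC nA nB (rcompat12 (rcompat23 H)) CY)).
case: (classic (exists l, C (RX l))) => [xC|xC]; first exact: tcover_X.
case: (classic (exists l, B (RX l))) => [xB|xB].
  exact: tcover23 (tcover_X nA' nC' xB (rcompat23 H)).
case: (classic (exists l, A (RX l))) => [xA|xA].
  exact: tcover12 (tcover23 (tcover_X nB' nC' xA (rcompat23 (rcompat12 H)))).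
by apply: tcover_UV => // l; apply/negP => ?; [apply: xA|apply: xB|apply: xC]; exists l.
Qed.

End TargetCover.

Section RbarStep.
Variable k : nat.

Lemma targetk_presentation : presentation (rtarget k) (targetk k.+1) (tlab_set k).
Proof.
split.
- by move=> t /targetk_lab; exact: tlab_set_nonempty.
- by move=> t w _; exact: tlab_set_lab.
- by move=> t t' /targetk_lab lt /targetk_lab lt'; exact: tlab_set_inj.
- move=> ts n; have := cfg_size n.
  case: ts n => [|a [|b [|c [|? ?]]]] //= /targetk_node /(tN_lab (ltn0Sn k)) lab _.
  by apply/targetk_all_lab; rewrite /= andbT.
- move=> ts e; have := cfg_size e.
  case: ts e => [|a [|b [|? ?]]] //= /targetk_edge /tE_lab lab _.
  by apply/targetk_all_lab; rewrite /= andbT.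
Qed.

Lemma targetk_node_cover t : tlab_in k.+1 t -> exists2 ts, inN (targetk k.+1) ts & t \in ts.
Proof.
have BC : inN (targetk k.+1) [:: TB; TC; TD k.+1] by apply/targetk_node; exact: tN_BC.
have AD j : j < k -> inN (targetk k.+1) [:: TA j.+1; TD j.+1; TD k.+1].
  by move=> jk; apply/targetk_node; exact: tN_AD.
case: t => [||[|i]|[|i]] //= lt.
- by exists [:: TB; TC; TD k.+1]; rewrite // mem_head.
- by exists [:: TB; TC; TD k.+1]; rewrite // !in_cons eqxx orbT.
- by exists [:: TA i.+1; TD i.+1; TD k.+1]; [apply: AD; lia|rewrite mem_head].
case: (ltnP i k) => ik.
  by exists [:: TA i.+1; TD i.+1; TD k.+1]; [apply: AD|rewrite !in_cons eqxx orbT].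
have -> : i = k by lia.
by exists [:: TB; TC; TD k.+1]; rewrite // !in_cons eqxx !orbT.
Qed.

Lemma targetk_node_maximal : maximal_presentation (rtarget k) (targetk k.+1) (tlab_set k)
  (inN (rtarget k)) (inN (targetk k.+1)).
Proof.
split.
- move=> ts us n hus; have sz := cfg_size n; have := all2_size hus; rewrite sz.
  case: ts sz n hus => [|t1 [|t2 [|t3 [|? ?]]]] //= _ /targetk_node n hus.
  rewrite /sg_choice in hus.
  case: us hus => [|a [|b [|c [|? ?]]]] //= /and4P [sa sb sc _] _.
  by apply/rtarget_node; exact: tN_tlab_set_rnode n sa sb sc.
- move=> ts t u n lu H; have := cfg_size n; rewrite size_rcons.
  case: ts n H => [|t1 [|t2 [|? ?]]] //= /targetk_node n H _.
  apply: tN_complete n lu _ => a b sa sb; apply/rtarget_node.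
  by apply: (H [:: a; b]); rewrite /sg_choice /= sa sb.
- move=> As [us hus] compat; have sz := cfg_size (compat us hus).
  have := all2_size hus; rewrite sz.
  case: As hus compat => [|A [|B [|C [|? ?]]]] //= hus compat _.
  case: us sz hus compat => [|a [|b [|c [|? ?]]]] //= _ /and4P [Aa Bb Cc _] compat.
  have H : rcompat k A B C.
    by move=> a' b' c' Aa' Bb' Cc'; apply/rtarget_node/compat; rewrite /= Aa' Bb' Cc'.
  have [t1 [t2 [t3 [n s1 s2 s3]]]] :=
    tcover_all (ex_intro _ a Aa) (ex_intro _ b Bb) (ex_intro _ c Cc) H.
  exists [:: t1; t2; t3]; first exact/targetk_node.
  by constructor; [exact: s1|constructor; [exact: s2|constructor; [exact: s3|constructor]]].
- by move=> t /targetk_lab; exact: targetk_node_cover.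
Qed.

Lemma targetk_edge_existential : existential_presentation (targetk k.+1) (tlab_set k)
  (Defs.inE (rtarget k)) (Defs.inE (targetk k.+1)).
Proof.
move=> ts /targetk_all_lab lts; split.
  case=> us hus e; have sz := cfg_size e; have := all2_size hus; rewrite sz.
  case: ts lts hus => [|t1 [|t2 [|? ?]]] //= /and3P [l1 l2 _] hus _.
  rewrite /sg_choice in hus.
  case: us sz hus e => [|a [|b [|? ?]]] //= _ /and3P [sa sb _] /rtarget_edge e.
  by apply/targetk_edge/tE_redge => //; exists a, b.
move=> e; have := cfg_size e.
case: ts lts e => [|t1 [|t2 [|? ?]]] //= /and3P [l1 l2 _] /targetk_edge /(tE_redge l1 l2) e _.
have [u1 [u2 [s1 s2 r]]] := e.
by exists [:: u1; u2]; [rewrite /sg_choice /= s1 s2|exact/rtarget_edge].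
Qed.

Lemma Rbar_presentation_targetk : Rbar_presentation (rtarget k) (targetk k.+1) (tlab_set k).
Proof.
split; [exact: targetk_presentation|exact: targetk_node_maximal|].
exact: targetk_edge_existential.
Qed.

End RbarStep.

Lemma cfg_ext (X : eqType) n (C1 C2 : seq X -> Prop) :
  (forall s, C1 s <-> C2 s) -> forall s, cfg n C1 s <-> cfg n C2 s.
Proof.
by move=> h s; split=> -[sz [s' [p c]]]; split=> //; exists s'; split=> //; apply/h.
Qed.

Lemma iso_ext (X Y : eqType) (P : problem X) (Q1 Q2 : problem Y) :
  (forall y, plab Q1 y <-> plab Q2 y) -> (forall s, inN Q1 s <-> inN Q2 s) ->
  (forall s, Defs.inE Q1 s <-> Defs.inE Q2 s) -> iso P Q1 -> iso P Q2.
Proof.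
move=> hl hn he [f [inj [lab [n [nl [e el]]]]]].
have al t : all_lab Q1 t <-> all_lab Q2 t by split=> h y /h /hl.
exists f; split=> //; split; first by move=> y; rewrite -hl.
split; first by move=> s; rewrite -hn.
split; first by move=> t /hn /nl /al.
split; first by move=> s; rewrite -he.
by move=> t /he /el /al.
Qed.

Lemma iso_target1 (X : eqType) (P : problem X) : iso P (targetk 1) -> iso P target1.
Proof.
have D1 x : isD 1 x <-> x = TD 1.
  by split=> [[j [j1 ->]]|->]; [have -> : j = 1 by lia|exists 1].
apply: iso_ext.
- move=> x /=; rewrite D1; split; last by case=> [->|[->|->]]; auto.
  by case=> [->|[->|[[i [i0 _]]|->]]]; auto; lia.
- apply: cfg_ext => s /=; split; [by case=> // -[i [i0 _]]; lia|by left].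
- apply: cfg_ext => s /=; split.
    case=> [[x [y [hx [hy ->]]]]|[i [j [ij [j1 _]]]]]; last lia.
    by exists x, y; rewrite -!D1.
  by case=> x [y [hx [hy ->]]]; left; exists x, y; rewrite !D1.
Qed.

Lemma Qk_succ k : iso (Qk k.+1) (targetk k.+1).
Proof.
elim: k => [|k IH]; apply: (Rbar_iso (inhabits TB) _ (Rbar_presentation_targetk _)).
  apply: (R_iso (inhabits RU) Pi0_iso).
  apply: R_presentation_rtarget; [exact: target0_lab|exact: target0_edge|].
  exact: rnode_target0E.
apply: (R_iso (inhabits RU) IH).
apply: R_presentation_rtarget; [exact: targetk_lab|exact: targetk_edge|].
by move=> w1 w2 w3; apply: rnode_targetkE.
Qed.

Theorem mainTheorem16 (k : nat) : iso (Qk k) (target k).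
Proof.
case: k => [|[|k]]; [exact: Pi0_iso|exact: iso_target1 (Qk_succ 0)|exact: Qk_succ].
Qed.
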